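(* Let $q$ be a prime power, let $X^2+\mu X+\lambda$ be a primitive polynomial over $\mathbb F_q$, let $\bar x\in PGL_2(q)$ be the image of $\begin{pmatrix}0&1\\-\lambda&-\mu\end{pmatrix}$, $C=\langle\bar x\rangle$, and let $S\le PGL_2(q)$ be the image of the invertible upper triangular matrices. For the right action of $S$ on $C$ defined by $cs=s'c^{[s]}$ ($s'\in S$, $c^{[s]}\in C$), the stabilizer $\mathrm{Stab}_S(\bar x)=\{s\in S:\bar x^{[s]}=\bar x\}$ is isomorphic to the cyclic group $\mathbb Z_{q-1}$.
   Context: $PGL_2(q)=CS$ with $C\cap S=1$, so each product $cs$ ($c\in C$, $s\in S$) is uniquely $s'c'$ with $s'\in S$, $c'\in C$; $c^{[s]}:=c'$. *)

From HB Require Import structures.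
From mathcomp Require Import all_boot all_order all_algebra all_fingroup all_solvable all_field.
From mathcomp Require Export qfpoly.
Set Implicit Arguments. Unset Strict Implicit. Unset Printing Implicit Defensive.
Import GRing.Theory.

Local Open Scope group_scope.

Section PGL2.
Variable F : finFieldType.

Definition GL2 := {'GL_2[F]}.

Definition scalarGL : {set GL2} := [set g : GL2 | is_scalar_mx (GLval g)].

Definition PGL2 := coset_of scalarGL.
Definition pgl (g : GL2) : PGL2 := coset scalarGL g.

(* an invertible matrix as an element of GL_2 (identity if not invertible) *)
Definition gl_of (M : 'M[F]_2) : GL2 := insubd (1 : GL2) M.

(* the image of the companion matrix [[0,1],[-lam,-mu]] *)
Definition xbar (mu lam : F) : PGL2 :=
  pgl (gl_of (\matrix_(i < 2, j < 2)
      (if i == 0 :> nat then (if j == 0 :> nat then 0 else 1)%R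
       else (if j == 0 :> nat then - lam else - mu)%R))).

Definition Cgrp (mu lam : F) : {set PGL2} := <[xbar mu lam]>.

Definition Sgrp : {set PGL2} := pgl @: [set g : GL2 | GLval g ord_max ord0 == 0%R].

(* c^[s] : the C-component c' of the unique factorization c s = s' c' *)
Definition bracket (mu lam : F) (c s : PGL2) : PGL2 :=
  odflt 1 [pick c' in Cgrp mu lam | (c * s) \in Sgrp :* c'].

Definition StabS (mu lam : F) : {set PGL2} :=
  [set s in Sgrp | bracket mu lam (xbar mu lam) s == xbar mu lam].

End PGL2.

Local Open Scope ring_scope.

From HB Require Import structures.
From mathcomp Require Import all_boot all_order all_algebra all_fingroup all_solvable all_field.
From mathcomp Require Import ring.
Set Implicit Arguments. Unset Strict Implicit. Unset Printing Implicit Defensive.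
Import GRing.Theory.

(* Since C meets S trivially, s stabilises xbar exactly when xbar s xbar^-1
   lies in S. For an upper triangular s = [[a, b], [0, d]] this is one linear
   condition mu a - lam b - mu d = 0, so modulo scalars s is the matrix
   [[u, beta (u - 1)], [0, 1]] with beta = mu / lam and u in F^*. These
   matrices form a copy of the multiplicative group F^*, which is cyclic of
   order q - 1. Primitivity of the polynomial is only used to get lam != 0. *)

Local Open Scope ring_scope.

Section Matrix2.
Variable R : pzRingType.

Definition mx2 (a b c d : R) : 'M[R]_2 := \matrix_(i < 2, j < 2)
  (if i == 0 :> nat then (if j == 0 :> nat then a else b)
   else (if j == 0 :> nat then c else d)).

Lemma mx2_eta (A : 'M[R]_2) : A = mx2 (A 0 0) (A 0 1) (A 1 0) (A 1 1).
Proof.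
apply/matrixP => -[[|[|//]] ?] [[|[|//]] ?]; rewrite mxE /=.
all: by congr (A _ _); apply: val_inj.
Qed.

Lemma mx2_00 a b c d : mx2 a b c d 0 0 = a. Proof. by rewrite mxE. Qed.
Lemma mx2_01 a b c d : mx2 a b c d 0 1 = b. Proof. by rewrite mxE. Qed.
Lemma mx2_10 a b c d : mx2 a b c d 1 0 = c. Proof. by rewrite mxE. Qed.
Lemma mx2_11 a b c d : mx2 a b c d 1 1 = d. Proof. by rewrite mxE. Qed.

Lemma mulmx2 a b c d a' b' c' d' : mx2 a b c d *m mx2 a' b' c' d' =
  mx2 (a * a' + b * c') (a * b' + b * d') (c * a' + d * c') (c * b' + d * d').
Proof.
apply/matrixP => -[[|[|//]] ?] [[|[|//]] ?].
all: by rewrite !mxE !big_ord_recl big_ord0 !mxE /= addr0.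
Qed.

Lemma mulmx2E (A B : 'M[R]_2) i j : (A *m B) i j = A i 0 * B 0 j + A i 1 * B 1 j.
Proof.
rewrite mxE !big_ord_recl big_ord0 addr0 /=.
by congr (_ + A i _ * B _ j); apply: val_inj.
Qed.

Lemma scale_mx2 k a b c d : k *: mx2 a b c d = mx2 (k * a) (k * b) (k * c) (k * d).
Proof. by apply/matrixP => -[[|[|//]] ?] [[|[|//]] ?]; rewrite !mxE. Qed.

Lemma scalar_mx2 a : a%:M = mx2 a 0 0 a.
Proof. by apply/matrixP => -[[|[|//]] ?] [[|[|//]] ?]; rewrite !mxE. Qed.

End Matrix2.

Section ProjectiveGroup.
Variable F : finFieldType.

Lemma gl_ofE (M : 'M[F]_2) : M \in unitmx -> GLval (gl_of M) = M.
Proof. by move=> uM; rewrite /gl_of val_insubd uM. Qed.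

Lemma gl_ofK (g : GL2 F) : gl_of (GLval g) = g.
Proof. by apply: val_inj; rewrite /= gl_ofE //; case: g. Qed.

Lemma gl_ofM (A B : 'M[F]_2) : A \in unitmx -> B \in unitmx ->
  (gl_of A * gl_of B)%g = gl_of (A *m B).
Proof.
move=> uA uB; apply: val_inj.
change (GLval (gl_of A * gl_of B)%g = GLval (gl_of (A *m B))).
by rewrite GL_ME !gl_ofE ?unitmx_mul ?uA.
Qed.

Lemma scalarGL_group_set : group_set (scalarGL F).
Proof.
apply/group_setP; split; first by rewrite inE GL_1E; apply/is_scalar_mxP; exists 1.
move=> x y; rewrite !inE GL_ME => /is_scalar_mxP[a ->] /is_scalar_mxP[b ->].
by apply/is_scalar_mxP; exists (a * b); rewrite -mulmxE -scalar_mxM.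
Qed.
Canonical scalarGL_group := Group scalarGL_group_set.

Lemma scalarGL_norm (g : GL2 F) : g \in 'N(scalarGL F)%g.
Proof.
rewrite inE; apply/subsetP => y /imsetP[z]; rewrite inE => /is_scalar_mxP[a za] ->.
rewrite inE conjgE !GL_ME za -!mulmxE -scalar_mxC mulmxA mulmxE -GL_ME mulVg GL_1E mul1r.
by apply/is_scalar_mxP; exists a.
Qed.

Lemma pglM (g h : GL2 F) : pgl (g * h)%g = (pgl g * pgl h)%g.
Proof. by rewrite /pgl coset_morphM ?scalarGL_norm. Qed.

Lemma pglV (g : GL2 F) : pgl g^-1%g = (pgl g)^-1%g.
Proof. by rewrite /pgl morphV ?scalarGL_norm. Qed.

Lemma pglX (g : GL2 F) k : pgl (g ^+ k)%g = (pgl g ^+ k)%g.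
Proof. by rewrite /pgl morphX ?scalarGL_norm. Qed.

Lemma pgl_eq1 (g : GL2 F) : (pgl g == 1%g) = is_scalar_mx (GLval g).
Proof.
apply/eqP/idP => [g1 | g_sc]; last by rewrite /pgl coset_id // inE.
by have := coset_idr (H := scalarGL_group) (scalarGL_norm g) g1; rewrite inE.
Qed.

Lemma pgl1 : pgl 1%g = 1%g :> PGL2 F.
Proof. by apply/eqP; rewrite pgl_eq1 GL_1E; apply/is_scalar_mxP; exists 1. Qed.

Lemma pgl_scalar (a : F) : a != 0 -> pgl (gl_of a%:M) = 1%g.
Proof.
move=> a0; apply/eqP; rewrite pgl_eq1 gl_ofE; first by apply/is_scalar_mxP; exists a.
by rewrite unitmxE det_scalar unitfE expf_neq0.
Qed.

Lemma pgl_surj (y : PGL2 F) : exists g, y = pgl g.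
Proof. by case: (cosetP y) => g _ ->; exists g. Qed.

Lemma pgl_eq_scalar (g h : GL2 F) :
  pgl g = pgl h -> exists c, GLval g = c%:M *m GLval h.
Proof.
move=> e; have /eqP : pgl (g * h^-1)%g = 1%g by rewrite pglM pglV e mulgV.
rewrite pgl_eq1 GL_ME => /is_scalar_mxP[c hc]; exists c.
by rewrite -hc -mulmxE -mulmxA mulmxE -GL_ME mulVg GL_1E mulr1.
Qed.

Lemma pgl_Sgrp (g : GL2 F) : (pgl g \in Sgrp F) = (GLval g 1 0 == 0).
Proof.
have -> : GLval g 1 0 = GLval g ord_max ord0 by congr (GLval g _ _); apply: val_inj.
rewrite /Sgrp; apply/imsetP/idP => [[h] | g10]; last by exists g; rewrite ?inE.
rewrite inE => /eqP h10 /pgl_eq_scalar[c ->].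
by rewrite mul_scalar_mx mxE h10 mulr0.
Qed.

Lemma GL_upper_diag_neq0 (g : GL2 F) : GLval g 1 0 = 0 ->
  (GLval g 0 0 != 0) && (GLval g 1 1 != 0).
Proof.
move=> g10; have e11 := congr1 (fun M : 'M[F]_2 => M 1 1) (congr1 GLval (mulgV g)).
have e00 := congr1 (fun M : 'M[F]_2 => M 0 0) (congr1 GLval (mulVg g)).
move: e11 e00; rewrite !GL_ME GL_1E -!mulmxE !mulmx2E g10 !mxE /= mul0r add0r mulr0 addr0.
move=> e11 e00; apply/andP; split; apply/eqP => z.
  by move: e00; rewrite z mulr0 => /eqP; rewrite eq_sym oner_eq0.
by move: e11; rewrite z mul0r => /eqP; rewrite eq_sym oner_eq0.
Qed.

Lemma Sgrp_group_set : group_set (Sgrp F).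
Proof.
apply/group_setP; split; first by rewrite -pgl1 pgl_Sgrp GL_1E mxE.
move=> y z; case: (pgl_surj y) => g ->; case: (pgl_surj z) => h ->.
rewrite -pglM !pgl_Sgrp GL_ME -mulmxE mulmx2E => /eqP-> /eqP->.
by rewrite mul0r mulr0 addr0.
Qed.
Canonical Sgrp_group := Group Sgrp_group_set.

End ProjectiveGroup.

Section Stabilizer.
Variables (F : finFieldType) (mu lam : F).
Hypothesis lam_neq0 : lam != 0.

Definition companion := mx2 0 1 (- lam) (- mu).
Definition companion_inv := mx2 (- mu / lam) (- 1 / lam) 1 0.

Lemma companionK : companion *m companion_inv = 1%:M.
Proof. by rewrite mulmx2 scalar_mx2; congr mx2; field. Qed.

Lemma companion_unit : companion \in unitmx.
Proof. by case: (mulmx1_unit companionK). Qed.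

Lemma companion_inv_unit : companion_inv \in unitmx.
Proof. by case: (mulmx1_unit companionK). Qed.

Lemma xbarE : xbar mu lam = pgl (gl_of companion).
Proof. by []. Qed.

Lemma xbarV : (xbar mu lam)^-1%g = pgl (gl_of companion_inv).
Proof.
rewrite xbarE -pglV; congr pgl; apply/eqP; rewrite eq_invg_mul gl_ofM ?companion_unit
  ?companion_inv_unit // companionK.
apply/eqP/val_inj; change (GLval (gl_of 1%:M) = GLval (1 : GL2 F)%g).
by rewrite gl_ofE ?unitmx1 // GL_1E.
Qed.

(* The powers of the companion matrix lie in the commutative algebra F[x]
   spanned by 1 and x. *)
Lemma companion_expg k : exists a b : F,
  GLval (gl_of companion ^+ k)%g = mx2 a b (- lam * b) (a - mu * b).
Proof.
elim: k => [|k [a [b IH]]].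
  exists 1, 0; rewrite expg0 GL_1E.
  by apply: etrans (scalar_mx2 1) _; congr mx2; ring.
exists (- lam * b), (a - mu * b).
by rewrite expgS GL_ME gl_ofE ?companion_unit // IH -mulmxE mulmx2; congr mx2; ring.
Qed.

Lemma Cgrp_Sgrp_trivial y : y \in Cgrp mu lam -> y \in Sgrp F -> y = 1%g.
Proof.
case/cycleP => k ->; rewrite xbarE -pglX pgl_Sgrp.
case: (companion_expg k) => a [b xk]; rewrite xk mx2_10 mulNr oppr_eq0 mulf_eq0.
rewrite (negbTE lam_neq0) => /eqP b0; apply/eqP; rewrite pgl_eq1.
by apply/is_scalar_mxP; exists a; rewrite xk scalar_mx2 b0; congr mx2; ring.
Qed.

Lemma xbar_neq1 : xbar mu lam != 1%g.
Proof.
rewrite xbarE pgl_eq1 gl_ofE ?companion_unit //; apply/is_scalar_mxP => -[a].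
by move/matrixP/(_ 0 1); rewrite mx2_01 mxE /= => /eqP; rewrite oner_eq0.
Qed.

(* The pick in [bracket] always succeeds at c = xbar when xbar s xbar^-1 is
   in S, and by the trivial intersection it can only return xbar then. *)
Lemma mem_StabS s : (s \in StabS mu lam) =
  (s \in Sgrp F) && (xbar mu lam * s * (xbar mu lam)^-1 \in Sgrp F)%g.
Proof.
set x := xbar mu lam; rewrite /StabS inE; case sS: (s \in Sgrp F) => //=.
rewrite /bracket; case: pickP => [c /andP[Cc] | none] /=.
  rewrite mem_rcoset => xsc; apply/eqP/idP => [cx | xsx]; first by rewrite cx in xsc.
  apply/eqP; rewrite eq_sym eq_mulgV1; apply/eqP; apply: Cgrp_Sgrp_trivial.
    by rewrite groupM ?groupV ?cycle_id.
  have -> : (x * c^-1 = (x * s * x^-1)^-1 * (x * s * c^-1))%g.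
    by rewrite !invMg invgK !mulgA !mulgKV.
  by rewrite (@groupM _ (Sgrp_group F)) ?(@groupV _ (Sgrp_group F)).
rewrite eq_sym (negbTE xbar_neq1); apply/esym/negbTE/negP => xsx.
by have := none x; rewrite /Cgrp cycle_id mem_rcoset xsx.
Qed.

Lemma conj_xbar_Sgrp (g : GL2 F) : GLval g 1 0 = 0 ->
  (xbar mu lam * pgl g * (xbar mu lam)^-1 \in Sgrp F)%g =
  (mu * GLval g 0 0 - lam * GLval g 0 1 - mu * GLval g 1 1 == 0).
Proof.
move=> g10; rewrite xbarV xbarE -!pglM pgl_Sgrp !GL_ME !gl_ofE ?companion_unit
  ?companion_inv_unit // -!mulmxE [GLval g]mx2_eta g10 !mulmx2.
by rewrite !(mx2_00, mx2_01, mx2_10, mx2_11); congr (_ == _); field.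
Qed.

Definition beta := mu / lam.

(* The affine maps z |-> u z + beta (u - 1), i.e. those fixing -beta. *)
Definition affine_mx (u : F) := mx2 u (beta * (u - 1)) 0 1.

Lemma affine_mxM u v : affine_mx u *m affine_mx v = affine_mx (u * v).
Proof. by rewrite mulmx2; congr mx2; ring. Qed.

Lemma affine_mx_unit u : u != 0 -> affine_mx u \in unitmx.
Proof.
move=> u0; have inv : affine_mx u *m mx2 u^-1 (- (beta * (u - 1)) * u^-1) 0 1 = 1%:M.
  by rewrite mulmx2 scalar_mx2; congr mx2; field.
by case: (mulmx1_unit inv).
Qed.

Definition affine_pgl (a : {unit F}) : PGL2 F := pgl (gl_of (affine_mx (val a))).

Lemma affine_pglE (a : {unit F}) :
  GLval (gl_of (affine_mx (val a))) = affine_mx (val a).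
Proof. by rewrite gl_ofE // affine_mx_unit // -unitfE (valP a). Qed.

Lemma affine_pglM : {in [set: {unit F}] &, {morph affine_pgl : a b / a * b}}%g.
Proof.
move=> a b _ _; rewrite /affine_pgl -pglM.
by rewrite gl_ofM ?affine_mx_unit -?unitfE ?(valP a) ?(valP b) // affine_mxM.
Qed.
Canonical affine_pgl_morphism := Morphism affine_pglM.

Lemma affine_pgl_injm : ('injm affine_pgl_morphism)%g.
Proof.
apply/injmP => a b _ _ /pgl_eq_scalar[c]; rewrite !affine_pglE mul_scalar_mx.
move/matrixP => E; have := E 1 1; have := E 0 0; rewrite !mxE /= mulr1 => e0 e1.
by apply: val_inj; rewrite /= e0 -e1 mul1r.
Qed.

Lemma upper_mx2_affine (a b d : F) : d != 0 -> mu * a - lam * b - mu * d = 0 ->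
  mx2 a b 0 d = d *: affine_mx (a / d).
Proof.
move=> d0 cond; have bE : b = (mu * a - mu * d) / lam.
  by apply: (mulIf lam_neq0); rewrite mulfVK // -[RHS]subr0 -cond; ring.
by rewrite /affine_mx /beta scale_mx2 bE; congr mx2; field; rewrite ?d0 ?lam_neq0.
Qed.

Lemma stab_upper_affine (g : GL2 F) : GLval g 1 0 = 0 ->
  mu * GLval g 0 0 - lam * GLval g 0 1 - mu * GLval g 1 1 = 0 ->
  exists2 u, u != 0 & pgl g = pgl (gl_of (affine_mx u)).
Proof.
move=> g10 cond; case/andP: (GL_upper_diag_neq0 g10) => a0 d0.
have u0 : GLval g 0 0 / GLval g 1 1 != 0 by rewrite mulf_neq0 ?invr_eq0.
exists (GLval g 0 0 / GLval g 1 1) => //.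
have dU : ((GLval g 1 1)%:M : 'M[F]_2) \in unitmx.
  by rewrite unitmxE det_scalar unitfE expf_neq0.
have gE : GLval g = (GLval g 1 1)%:M *m affine_mx (GLval g 0 0 / GLval g 1 1).
  by rewrite mul_scalar_mx -(upper_mx2_affine d0 cond) [LHS]mx2_eta g10.
rewrite -[g in pgl g]gl_ofK [X in pgl (gl_of X) = _]gE -gl_ofM ?affine_mx_unit //.
by rewrite pglM pgl_scalar ?mul1g.
Qed.

Lemma StabS_affine : StabS mu lam = (affine_pgl_morphism @* [set: {unit F}])%g.
Proof.
rewrite morphimEdom; apply/setP => s; apply/idP/imsetP => [|[a _ ->]]; last first.
  rewrite mem_StabS pgl_Sgrp affine_pglE mx2_10 eqxx conj_xbar_Sgrp affine_pglE ?mx2_10 //.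
  by rewrite mx2_00 mx2_01 mx2_11 /beta; apply/eqP; field.
case: (pgl_surj s) => g ->; rewrite mem_StabS pgl_Sgrp => /andP[/eqP g10].
rewrite conj_xbar_Sgrp // => /eqP cond.
have [u u0 ->] := stab_upper_affine g10 cond.
have uU : u \is a GRing.unit by rewrite unitfE.
by exists (FinRing.Unit uU); rewrite ?inE.
Qed.

Lemma StabS_cyclic : cyclic (StabS mu lam).
Proof. by rewrite StabS_affine morphim_cyclic ?field_unit_group_cyclic. Qed.

Lemma card_StabS : #|StabS mu lam| = #|F|.-1.
Proof.
by rewrite StabS_affine card_injm ?affine_pgl_injm ?subsetT ?card_finField_unit.
Qed.

End Stabilizer.

Lemma primitive_quadratic_const_neq0 (F : finFieldType) (mu lam : F) :
  primitive_poly ('X^2 + mu *: 'X + lam%:P) -> lam != 0.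
Proof.
case/primitive_polyP => -[[_ irr] _] _ _; apply/negP => /eqP l0.
have dvdX : ('X - 0%:P) %| 'X^2 + mu *: 'X + lam%:P.
  by rewrite -root_factor_theorem rootE !hornerE l0 expr2 mul0r addr0.
have size_X : size ('X - 0%:P : {poly F}) != 1%N by rewrite size_XsubC.
have := eqp_size (irr _ size_X dvdX).
rewrite size_XsubC l0 polyC0 addr0 size_polyDl ?size_polyXn //.
by rewrite (leq_ltn_trans (size_scale_leq _ _)) // size_polyX.
Qed.

Theorem mainTheorem5 (F : finFieldType) (q : nat) (hq : #|F| = q) (mu lam : F)
  (hprim : primitive_poly ('X^2 + mu *: 'X + lam%:P)%R) :
  StabS mu lam \isog Zp q.-1.
Proof.
have lam0 := primitive_quadratic_const_neq0 hprim.
have /cyclicP[s Es] := StabS_cyclic mu lam0.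
rewrite Es isog_sym (_ : q.-1 = #[s]%g); first exact: Zp_isog.
by rewrite /order -Es card_StabS // hq.
Qed.
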